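(* Let $p \geq 3$ be a prime and $x, y \in \mathbb{Z}$ with $x^2 - 2 = y^p$ and $y \neq -1$. Then: (1) every prime factor of $\frac{y^p-1}{y-1}$ is $\equiv \pm 1 \pmod{12}$; (2) every prime factor of $\frac{y^p-1}{y-1}$ is $p$ or $\equiv 1 \pmod p$; either $p \nmid (y-1)$ and $\frac{y^p-1}{y-1} \equiv 1 \pmod p$, or $p \mid (y-1)$ and $\frac{y^p-1}{y-1} \equiv p \pmod{p^2}$, and the latter case cannot happen unless $p \equiv \pm 1 \pmod{12}$; (3) $\frac{y^p-1}{y-1} \equiv 1 \pmod{24}$; (4) if $p \equiv 2 \pmod 3$ or $p = 3$, then $3 \nmid x$. *)

From mathcomp Require Import all_boot all_order all_algebra.
Set Implicit Arguments. Unset Strict Implicit. Unset Printing Implicit Defensive.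
Import Order.TTheory GRing.Theory Num.Theory.
Local Open Scope ring_scope.

(* The integer (y^p - 1)/(y - 1), written literally as an integer quotient.
   (In the theorem y <> 1 automatically, since x^2 - 2 = 1 has no integer
   solution, so this is an exact division.) *)
Definition Phi (y : int) (p : nat) : int := ((y ^+ p - 1) %/ (y - 1))%Z.

Definition pm1_mod (q m : nat) : bool := (q %% m == 1 %% m)%N || (q %% m == (m - 1) %% m)%N.

From mathcomp Require Import all_boot all_order all_algebra cyclic finfield.
From mathcomp Require Import zify ring.
Import Order.TTheory GRing.Theory Num.Theory.
Set Implicit Arguments.
Unset Strict Implicit.
Unset Printing Implicit Defensive.
Local Open Scope ring_scope.

(* Since Y^5 = Y^3 in Z/8, the equation x^2 - 2 = y^p reduces modulo 8 to
   x^2 - 2 = y^3, which forces y = -1 (mod 8); hence y <> 1 and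
   Phi y p = 1 + y + ... + y^(p-1) = 1 (mod 8).  The identity
   (y - 1) Phi y p = x^2 - 3 makes 3 a square modulo every prime q dividing
   Phi y p, and q <> 3 since 3 | Phi y p would give 3 | x, 3 | y - 1 and then
   9 | x^2 - 3.  In a finite field of odd order not divisible by 3, -1 is a
   square iff 4 | q - 1 (an element of order 4) and -3 is a square iff
   3 | q - 1 (a primitive cube root of unity); as 3 is a square both
   conditions coincide, i.e. q = +-1 (mod 12).  Multiplying out, Phi y p is
   +-1 modulo 12 and 1 modulo 8, hence 1 modulo 24.  Modulo a prime divisor q,
   y has order 1 or p, which gives q = p or q = 1 (mod p); modulo p^2,
   y = 1 + tp gives y^i = 1 + itp, and summing, Phi y p = p + tp C(p, 2).
   Finally 3 | x forces y = 1 (mod 3), so Phi y p = p (mod 3) must be 1. *)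

Lemma pfactor_prim_root (R : nzRingType) (l k : nat) (a : R) :
  prime l -> a ^+ (l ^ k.+1) = 1 -> a ^+ (l ^ k) != 1 -> (l ^ k.+1).-primitive_root a.
Proof.
move=> pr_l a_lk1 a_lk_neq1.
have lk1_gt0 : (0 < l ^ k.+1)%N by rewrite expn_gt0 prime_gt0.
have [m prim_a /(dvdn_pfactor _ _ pr_l)[j le_jk1 def_m]] := prim_order_exists lk1_gt0 a_lk1.
move: prim_a; rewrite def_m; case: ltngtP le_jk1 => // [lt_jk1 _ | -> //] prim_a.
by move: a_lk_neq1; rewrite -(prim_order_dvd prim_a) dvdn_exp2l.
Qed.

Lemma prime_prim_root (R : nzRingType) (l : nat) (a : R) :
  prime l -> a ^+ l = 1 -> a != 1 -> l.-primitive_root a.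
Proof. by move=> pr_l; have := @pfactor_prim_root _ l 0 a pr_l; rewrite expn0 expn1 expr1. Qed.

Section FinFieldSquares.
Variable F : finFieldType.

Lemma expf_card_pred (a : F) : a != 0 -> a ^+ #|F|.-1 = 1.
Proof.
move=> a_neq0; apply: (mulfI a_neq0).
by rewrite -exprS prednK ?expf_card ?mulr1 // ltnW ?finNzRing_gt1.
Qed.

Lemma finField_prim_rootP (d : nat) :
  (exists z : F, d.-primitive_root z) <-> (d %| #|F|.-1)%N.
Proof.
split=> [[z prim_z] | dvd_d].
  rewrite (prim_order_dvd prim_z) expf_card_pred // (prim_root_eq0 prim_z).
  by rewrite -lt0n (prim_order_gt0 prim_z).
have /hasP[z _ prim_z] : has (#|F|.-1).-primitive_root (enum (predC1 (0 : F))).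
  apply: has_prim_root; rewrite ?enum_uniq -?cardE ?cardC1 //.
    by rewrite ltn_predRL finNzRing_gt1.
  by apply/allP => a; rewrite mem_enum => a_neq0; apply/unity_rootP/expf_card_pred.
by exists (z ^+ (#|F|.-1 %/ d)); apply: dvdn_prim_root.
Qed.

Hypothesis two_neq0 : (2%:R : F) != 0.

Lemma finField_sqrN1P : (exists b : F, b ^+ 2 = -1) <-> (4 %| #|F|.-1)%N.
Proof.
rewrite -finField_prim_rootP; split=> [[b b2] | [i prim_i]].
  exists b; apply: (@pfactor_prim_root _ 2 1) => //; last first.
    by rewrite expn1 b2 eq_sym -subr_eq0 opprK -mulr2n.
  by rewrite (exprM b 2 2) b2 sqrrN expr1n.
exists i; have i2_neq1 : i ^+ 2 != 1 by rewrite -(prim_order_dvd prim_i).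
have : (i ^+ 2 - 1) * (i ^+ 2 + 1) = 0.
  by rewrite -subr_sqr -exprM (prim_expr_order prim_i) expr1n subrr.
by move/eqP; rewrite mulf_eq0 subr_eq0 (negbTE i2_neq1) addr_eq0 => /eqP.
Qed.

Hypothesis three_neq0 : (3%:R : F) != 0.

Lemma finField_sqrN3P : (exists c : F, c ^+ 2 = - 3%:R) <-> (3 %| #|F|.-1)%N.
Proof.
rewrite -finField_prim_rootP; split=> [[c c2] | [w prim_w]].
  exists ((c - 1) / 2%:R); apply: prime_prim_root => //.
    apply/eqP; rewrite -subr_eq0.
    have -> : ((c - 1) / 2%:R) ^+ 3 - 1 = (c - 3%:R) * (c ^+ 2 + 3%:R) / 8%:R.
      by field; rewrite (natrM _ 2 4) (natrM _ 2 2) !mulf_neq0.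
    by rewrite c2 addNr mulr0 mul0r.
  apply: contra_neq (mulf_neq0 (mulf_neq0 two_neq0 two_neq0) three_neq0) => c1.
  have c3 : c = 3%:R by rewrite -[c](subrK 1) -[c - 1](divfK two_neq0) c1 mul1r natr1.
  by move: c2; rewrite c3 -natrX -!natrM => /eqP; rewrite -subr_eq0 opprK -natrD => /eqP.
have w_neq1 : w != 1 by rewrite -[w]expr1 -(prim_order_dvd prim_w).
have w3 := prim_expr_order prim_w.
have w_root : w ^+ 2 + w + 1 = 0.
  have : (w - 1) * (w ^+ 2 + w + 1) = w ^+ 3 - 1 by ring.
  by rewrite w3 subrr => /eqP; rewrite mulf_eq0 subr_eq0 (negbTE w_neq1) => /eqP.
exists (2%:R * w + 1).
have -> : (2%:R * w + 1) ^+ 2 = 4%:R * (w ^+ 2 + w + 1) - 3%:R by ring.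
by rewrite w_root mulr0 sub0r.
Qed.

Lemma finField_sqr3_dvd_card (a : F) :
  a ^+ 2 = 3%:R -> (4 %| #|F|.-1)%N = (3 %| #|F|.-1)%N.
Proof.
move=> a2; have a_neq0 : a != 0 by apply: contraNneq three_neq0 => a0; rewrite -a2 a0 expr0n.
apply/idP/idP => [/finField_sqrN1P[b b2] | /finField_sqrN3P[c c2]].
  by apply/finField_sqrN3P; exists (a * b); rewrite exprMn a2 b2 mulrN1.
by apply/finField_sqrN1P; exists (c / a); rewrite expr_div_n c2 a2 mulNr divff.
Qed.

End FinFieldSquares.

Lemma pm1_mod12_of_dvd_sqr_sub3 (q : nat) (x : int) :
  prime q -> (3 < q)%N -> (q %| x ^+ 2 - 3)%Z -> pm1_mod q 12.
Proof.
move=> pr_q q_gt3 dvd_q.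
have natr_neq0 n : (0 < n < q)%N -> (n%:R : 'F_q) != 0.
  by case/andP=> n_gt0 lt_nq; rewrite -(dvdn_pcharf (pchar_Fp pr_q)) gtnNdvd.
have x2 : (x%:~R : 'F_q) ^+ 2 = 3%:R.
  move: dvd_q; rewrite (dvdz_pcharf (pchar_Fp pr_q)) rmorphB rmorphXn rmorph_nat.
  by rewrite subr_eq0 => /eqP.
have two_neq0 : (2%:R : 'F_q) != 0 by apply: natr_neq0; lia.
have three_neq0 : (3%:R : 'F_q) != 0 by apply: natr_neq0; lia.
have := @finField_sqr3_dvd_card _ two_neq0 three_neq0 _ x2; rewrite card_Fp // => dvd4_dvd3.
have ndvd2 : ~~ (2 %| q)%N by rewrite dvdn_prime2 //; lia.
have ndvd3 : ~~ (3 %| q)%N by rewrite dvdn_prime2 //; lia.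
rewrite /pm1_mod; lia.
Qed.

Lemma pm1_modM (m a b : nat) : pm1_mod a m -> pm1_mod b m -> pm1_mod (a * b) m.
Proof.
rewrite /pm1_mod -modnMm => /orP[]/eqP-> /orP[]/eqP->;
  rewrite modnMm ?mul1n ?muln1 ?eqxx ?orbT //.
case: m => [|[|m]] //; rewrite subn1 /=.
have -> : (m.+1 * m.+1 = m * m.+2 + 1)%N by ring.
by rewrite modnMDl eqxx.
Qed.

Lemma pm1_mod_prime_factors (m n : nat) :
  (0 < n)%N -> (forall q, prime q -> (q %| n)%N -> pm1_mod q m) -> pm1_mod n m.
Proof.
move=> n_gt0 pm1_n; rewrite (prod_prime_decomp n_gt0) big_seq.
apply: (big_ind (pm1_mod^~ m)) => [|a b|[q e] /mem_prime_decomp[pr_q e_gt0 dvd_qe]].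
- by rewrite /pm1_mod eqxx.
- exact: pm1_modM.
have pm1_q : pm1_mod q m by apply: pm1_n (dvdn_trans (dvdn_exp e_gt0 (dvdnn q)) dvd_qe).
by elim: e {e_gt0 dvd_qe} => [|e IHe]; rewrite ?expnS ?pm1_modM // /pm1_mod eqxx.
Qed.

Lemma Zp_intr_eq0 (m : nat) (z : int) : (1 < m)%N -> ((z%:~R : 'Z_m) == 0) = (m %| z)%Z.
Proof.
move=> m_gt1; have natr_eq0 n : ((n%:R : 'Z_m) == 0) = (m %| n)%N.
  by rewrite -(inj_eq val_inj) /= val_Zp_nat.
by case: z => n; rewrite ?NegzE ?mulrNz ?oppr_eq0 natr_eq0.
Qed.

Lemma expr_period2 (R : pzSemiRingType) (a : R) (k n : nat) :
  a ^+ k.+2 = a ^+ k -> (k <= n)%N -> odd n = odd k -> a ^+ n = a ^+ k.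
Proof.
move=> ak le_kn odd_nk; rewrite -(subnKC le_kn).
have /dvdnP[j ->] : (2 %| n - k)%N by rewrite dvdn2 oddB // odd_nk addbb.
elim: j => [|j IHj]; first by rewrite addn0.
by rewrite mulSn addnA addn2 exprD ak -exprD.
Qed.

Lemma PhiE (y : int) (n : nat) : y != 1 -> Phi y n = \sum_(i < n) y ^+ i.
Proof. by move=> y_neq1; rewrite /Phi subrX1 mulKz // subr_eq0. Qed.

Lemma mul_subr1_Phi (y : int) (n : nat) : y != 1 -> (y - 1) * Phi y n = y ^+ n - 1.
Proof. by move=> y_neq1; rewrite PhiE // subrX1. Qed.

Lemma dvdz_Phi_sub_sum (m y c : int) (n : nat) :
  y != 1 -> (m %| y - c)%Z -> (m %| Phi y n - \sum_(i < n) c ^+ i)%Z.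
Proof.
move=> y_neq1 dvd_m; rewrite PhiE // -sumrB.
by apply: rpred_sum => i _; rewrite subrXX dvdz_mulr.
Qed.

Lemma dvdz_Phi_subn (m y : int) (n : nat) :
  y != 1 -> (m %| y - 1)%Z -> (m %| Phi y n - n%:Z)%Z.
Proof.
move=> y_neq1 /(dvdz_Phi_sub_sum n y_neq1).
by under eq_bigr do rewrite expr1n; rewrite sumr_const card_ord natz.
Qed.

Lemma sumr_signr_odd (n : nat) : odd n -> \sum_(i < n) (-1 : int) ^+ i = 1.
Proof. by move=> n_odd; rewrite -PhiE // /Phi -signr_odd n_odd divzz. Qed.

Lemma dvdz_Phi_sub1 (m y : int) (n : nat) :
  odd n -> y != 1 -> (m %| y + 1)%Z -> (m %| Phi y n - 1)%Z.
Proof.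
move=> n_odd y_neq1 dvd_m; rewrite -(sumr_signr_odd n_odd).
by apply: dvdz_Phi_sub_sum; rewrite ?opprK.
Qed.

Lemma Phi_mod_prime (p : nat) (y : int) :
  prime p -> ~~ (p %| y - 1)%Z -> (Phi y p == 1 %[mod p])%Z.
Proof.
move=> pr_p; rewrite eqz_mod_dvd !(dvdz_pcharf (pchar_Fp pr_p)) !rmorphB rmorph1 /=.
move=> Y_neq1; have y_neq1 : y != 1 by apply: contraNneq Y_neq1 => ->; rewrite subrr.
have /(congr1 (intr : int -> 'F_p)) := mul_subr1_Phi p y_neq1.
have Yp : (y%:~R : 'F_p) ^+ p = y%:~R by rewrite -[in X in _ ^+ X](card_Fp pr_p) expf_card.
rewrite rmorphM !rmorphB rmorphXn rmorph1 /= Yp.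
by rewrite -{2}[_ - 1]mulr1 => /(mulfI Y_neq1) ->; rewrite subrr.
Qed.

Lemma Phi_mod_prime_sqr (p : nat) (y : int) :
  prime p -> (2 < p)%N -> y != 1 -> (p %| y - 1)%Z -> (Phi y p == p %[mod (p ^ 2)%N])%Z.
Proof.
move=> pr_p p_gt2 y_neq1 dvd_p; rewrite eqz_mod_dvd.
have -> : Phi y p - p%:Z = (y - 1) * \sum_(i < p) Phi y i.
  have -> : p%:Z = \sum_(i < p) 1 by rewrite sumr_const card_ord natz.
  rewrite mulr_sumr PhiE // -sumrB.
  by apply: eq_bigr => i _; rewrite mul_subr1_Phi.
have dvd_sum : (p %| \sum_(i < p) Phi y i)%Z.
  rewrite -(subrK (\sum_(i < p) (i : int)) (\sum_(i < p) Phi y i)) -sumrB rpredD //.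
    by apply: rpred_sum => i _; apply: dvdz_Phi_subn.
  rewrite -(big_morph Posz PoszD (erefl : Posz 0 = 0)) -(big_mkord xpredT id) bin2_sum.
  by rewrite dvdzE prime_dvd_bin // ltnW.
by rewrite expnS expn1 PoszM dvdz_mul.
Qed.

Lemma prime_dvd_Phi (p q : nat) (y : int) :
  prime p -> prime q -> y != 1 -> (q %| Phi y p)%Z -> q = p \/ (q %% p = 1)%N.
Proof.
move=> pr_p pr_q y_neq1 dvd_q; have pchar_q := pchar_Fp pr_q.
have [dvd_y | ndvd_y] := boolP (q %| y - 1)%Z.
  left; apply/eqP; rewrite -(dvdn_prime2 pr_q pr_p).
  have := rpredB dvd_q (dvdz_Phi_subn p y_neq1 dvd_y).
  by rewrite subKr.
right; move: ndvd_y; rewrite (dvdz_pcharf pchar_q) rmorphB rmorph1 /= subr_eq0 => Y_neq1.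
have Yp : (y%:~R : 'F_q) ^+ p = 1.
  move: (dvdz_mull (y - 1) dvd_q); rewrite mul_subr1_Phi // (dvdz_pcharf pchar_q).
  by rewrite rmorphB rmorphXn rmorph1 subr_eq0 => /eqP.
have /finField_prim_rootP : exists z : 'F_q, p.-primitive_root z.
  by exists (y%:~R); apply: prime_prim_root.
rewrite card_Fp // => /eqP dvd_p.
by rewrite -(prednK (prime_gt0 pr_q)) -addn1 -modnDml dvd_p add0n modn_small ?prime_gt1.
Qed.

Lemma expr5_Z8 (Y : 'Z_8) : Y ^+ 5 = Y ^+ 3.
Proof. by apply/val_inj; case: Y => -[|[|[|[|[|[|[|[|]]]]]]]]. Qed.

Lemma sqr_sub2_cube_Z8 (X Y : 'Z_8) : X ^+ 2 - 2%:R = Y ^+ 3 -> Y = -1.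
Proof.
move/(congr1 val); case: X => -[|[|[|[|[|[|[|[|]]]]]]]] // ?;
  by case: Y => -[|[|[|[|[|[|[|[|]]]]]]]] // ? _; apply/val_inj.
Qed.

Section Equation.

Variables (p : nat) (x y : int).
Hypotheses (pr_p : prime p) (p_ge3 : (3 <= p)%N) (xy : x ^+ 2 - 2 = y ^+ p).

Let p_odd : odd p.
Proof. by case: (even_prime pr_p) p_ge3 => [->|]. Qed.

Lemma equation_dvd8_addr1 : (8 %| y + 1)%Z.
Proof.
have /(congr1 (intr : int -> 'Z_8)) := xy.
rewrite rmorphB !rmorphXn rmorph_nat (expr_period2 (expr5_Z8 _) p_ge3) ?p_odd //.
by move/sqr_sub2_cube_Z8 => Y_eq; rewrite -Zp_intr_eq0 // rmorphD rmorph1 Y_eq addNr.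
Qed.

Lemma equation_neq1 : y != 1.
Proof. by apply: contraTneq equation_dvd8_addr1 => ->. Qed.

Lemma equation_Phi_mod8 : (8 %| Phi y p - 1)%Z.
Proof. exact: dvdz_Phi_sub1 p_odd equation_neq1 equation_dvd8_addr1. Qed.

Lemma equation_mul_Phi : (y - 1) * Phi y p = x ^+ 2 - 3.
Proof. by rewrite mul_subr1_Phi ?equation_neq1 // -xy; ring. Qed.

Lemma equation_dvd3_subr1 : (3 %| x)%Z -> (3 %| y - 1)%Z.
Proof.
have pr3 : prime 3 by [].
have pchar3 := pchar_Fp pr3.
rewrite !(dvdz_pcharf pchar3) rmorphB rmorph1 => /eqP X0.
have Y3 : (y%:~R : 'F_3) ^+ 3 = y%:~R ^+ 1.
  by rewrite expr1 -[in X in _ ^+ X](card_Fp pr3) expf_card.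
have /(congr1 (intr : int -> 'F_3)) := xy.
rewrite rmorphB !rmorphXn rmorph_nat /= X0 expr0n sub0r.
rewrite (expr_period2 Y3 (ltnW (ltnW p_ge3))) ?p_odd // expr1 => <-.
by rewrite -opprD natr1 oppr_eq0 pchar_Fp_0.
Qed.

Lemma equation_ndvd3_Phi : ~~ (3 %| Phi y p)%Z.
Proof.
apply/negP => dvd3_Phi.
have dvd3_x : (3 %| x)%Z.
  have : (3 %| x ^+ 2)%Z by rewrite -(subrK 3 (x ^+ 2)) -equation_mul_Phi rpredD ?dvdz_mull.
  by rewrite !dvdzE abszX Euclid_dvdX // andbT.
have : (3 * 3 %| x ^+ 2 - 3)%Z.
  by rewrite -equation_mul_Phi dvdz_mul ?equation_dvd3_subr1.
have : (3 * 3 %| x ^+ 2)%Z by rewrite expr2 dvdz_mul.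
lia.
Qed.

Lemma equation_prime_dvd_Phi_pm1_mod12 (q : nat) : prime q -> (q %| Phi y p)%Z -> pm1_mod q 12.
Proof.
move=> pr_q dvd_q; apply: (pm1_mod12_of_dvd_sqr_sub3 (x := x) pr_q).
  have := equation_Phi_mod8; have := equation_ndvd3_Phi; have := prime_gt1 pr_q.
  by case: q {pr_q} dvd_q => [|[|[|[|q]]]] //; lia.
by rewrite -equation_mul_Phi dvdz_mull.
Qed.

Lemma equation_Phi_mod24 : (Phi y p == 1 %[mod 24])%Z.
Proof.
have := equation_Phi_mod8; rewrite eqz_mod_dvd => dvd8.
have : pm1_mod `|Phi y p| 12.
  apply: pm1_mod_prime_factors => [|q pr_q dvd_q]; first by lia.
  by apply: equation_prime_dvd_Phi_pm1_mod12; rewrite // dvdzE.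
rewrite /pm1_mod; lia.
Qed.

Lemma equation_ndvd3_x : (p %% 3 = 2)%N \/ p = 3%N -> ~~ (3 %| x)%Z.
Proof.
move=> p_mod3; apply/negP => /equation_dvd3_subr1 /(dvdz_Phi_subn p equation_neq1) dvd3.
have := equation_Phi_mod24; rewrite eqz_mod_dvd; lia.
Qed.

End Equation.

Theorem theorem2p8 (p : nat) (x y : int) :
  prime p -> (3 <= p)%N -> x ^+ 2 - 2 = y ^+ p -> y != -1 ->
  (* (1) *)
  (forall q : nat, prime q -> (q %| Phi y p)%Z -> pm1_mod q 12)
  /\
  (* (2) *)
  ((forall q : nat, prime q -> (q %| Phi y p)%Z -> q = p \/ (q %% p = 1)%N)
   /\ ((~~ (p %| y - 1)%Z /\ (Phi y p == 1 %[mod p])%Z)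
       \/ ((p %| y - 1)%Z /\ (Phi y p == p %[mod (p ^ 2)%N])%Z))
   /\ ((p %| y - 1)%Z -> pm1_mod p 12))
  /\
  (* (3) *)
  (Phi y p == 1 %[mod 24])%Z
  /\
  (* (4) *)
  ((p %% 3 = 2)%N \/ p = 3%N -> ~~ (3 %| x)%Z).
Proof.
move=> pr_p p_ge3 xy _.
have y_neq1 := equation_neq1 pr_p p_ge3 xy.
have pm1_Phi := equation_prime_dvd_Phi_pm1_mod12 pr_p p_ge3 xy.
split=> //; split.
  split; first by move=> q pr_q; apply: prime_dvd_Phi.
  split.
    have [dvd_p | ndvd_p] := boolP (p %| y - 1)%Z; [right | left]; split=> //.
      exact: Phi_mod_prime_sqr.
    exact: Phi_mod_prime.
  move=> /(dvdz_Phi_subn p y_neq1) dvd_p; apply: pm1_Phi => //.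
  by rewrite -(subrK p%:Z (Phi y p)) rpredD ?dvdzz.
split; first exact: equation_Phi_mod24 pr_p p_ge3 xy.
exact: equation_ndvd3_x pr_p p_ge3 xy.
Qed.
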